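(* Let $B$ be a Borel ideal of $S=k[x_1,\dots,x_n]$ and let $m$ be a monomial with $\max(m)=p$. If $m\in\mathrm{Bgens}(B)$ and $\deg m\ge\deg m'$ for all $m'\in\mathrm{Bgens}(B)$, then $\frac{m}{x_p}$ is a $p$-socle for $B$.
   Context: For a monomial $m=x_{i_1}\cdots x_{i_d}$ with $i_1\le\dots\le i_d$, $\max(m)=i_d$. A Borel ideal is a monomial ideal closed under Borel moves $m\mapsto m\frac{x_{i_1}}{x_{j_1}}\cdots\frac{x_{i_s}}{x_{j_s}}$ ($i_t<j_t$, all $x_{j_t}\mid m$); $\mathrm{Bgens}(B)$ is the unique minimal set $T$ of monomials such that $B$ is the smallest Borel ideal containing $T$. A monomial $\nu$ is a $p$-socle for $B$ if $(B:\nu)=(x_1,\dots,x_p)$. *)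

(* Monomials of S = k[x_1,...,x_n] are exponent vectors;
   a monomial ideal is represented by the set (predicate) of monomials it
   contains. Variables are 0-indexed: x_{i+1} <-> index i : 'I_n. *)
From mathcomp Require Import all_boot all_order.
Set Implicit Arguments. Unset Strict Implicit. Unset Printing Implicit Defensive.

Definition mono (n : nat) := {ffun 'I_n -> nat}.

Definition mmul n (a b : mono n) : mono n := [ffun i => a i + b i].

Definition mdeg n (m : mono n) : nat := \sum_(i < n) m i.

(* m / x_j  (used only when x_j divides m) *)
Definition mdivx n (m : mono n) (j : 'I_n) : mono n :=
  [ffun i => if i == j then (m i).-1 else m i].

Definition bmove n (m : mono n) (i j : 'I_n) : mono n :=
  [ffun k => if k == i then (m k).+1 else if k == j then (m k).-1 else m k].

Definition is_max n (m : mono n) (j : 'I_n) : Prop :=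
  0 < m j /\ forall k : 'I_n, j < k -> m k = 0.

Definition monideal n (B : mono n -> Prop) : Prop :=
  forall a b : mono n, B a -> B (mmul a b).

(* Borel ideal: monomial ideal closed under (elementary, hence all) Borel moves *)
Definition borel n (B : mono n -> Prop) : Prop :=
  monideal B /\
  forall (m : mono n) (i j : 'I_n), i < j -> 0 < m j -> B m -> B (bmove m i j).

Definition bgenerates n (T B : mono n -> Prop) : Prop :=
  [/\ borel B, (forall t, T t -> B t) &
      forall B' : mono n -> Prop, borel B' -> (forall t, T t -> B' t) ->
        forall u, B u -> B' u].

(* T = Bgens(B): a minimal (w.r.t. inclusion) set of monomials generating B
   as a Borel ideal (such a set is unique). *)
Definition is_Bgens n (B T : mono n -> Prop) : Prop :=
  bgenerates T B /\
  forall T' : mono n -> Prop, (forall t, T' t -> T t) -> bgenerates T' B ->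
    forall t, T t -> T' t.

(* nu is a p-socle for B:  (B : nu) = (x_1, ..., x_p), as monomial ideals *)
Definition psocle n (B : mono n -> Prop) (nu : mono n) (p : nat) : Prop :=
  forall mu : mono n, B (mmul mu nu) <-> exists i : 'I_n, i < p /\ 0 < mu i.

(* If m could be dropped from Bgens(B), the smaller generating set would have
   to produce m from its other elements, all of degree at most deg m.  The
   monomial w = mu * m / x_p (mu supported on x_{p+1}, ..., x_n) has only
   deg m - 1 units of degree on x_1, ..., x_p, so the "fill-up" ideal of
   monomials with at least deg m units there does not contain it; hence w is
   divisible by some v of degree at most deg m generated by the other
   generators.  Borel moves push the excess of v beyond x_p onto the first p
   variables until v divides m, so m is generated by the others after all. *)
From mathcomp Require Import all_boot all_order.
Set Implicit Arguments. Unset Strict Implicit. Unset Printing Implicit Defensive.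

Section Monomials.

Variable n : nat.
Implicit Types (u v a b : mono n) (i j k p : 'I_n) (P : pred 'I_n).

Definition xvar j : mono n := [ffun k => nat_of_bool (k == j)].

Definition pdeg P u : nat := \sum_(k | P k) u k.

Definition mdvd u v : Prop := forall k, u k <= v k.

Lemma pdeg_mmul P a b : pdeg P (mmul a b) = pdeg P a + pdeg P b.
Proof. by rewrite /pdeg -big_split; apply: eq_bigr => k _; rewrite ffunE. Qed.

Lemma pdeg_xvar P j : pdeg P (xvar j) = P j.
Proof.
rewrite /pdeg; case: (boolP (P j)) => Pj.
  rewrite (bigD1 j) //= ffunE eqxx big1 // => k /andP[_ /negbTE].
  by rewrite ffunE => ->.
by rewrite big1 // => k Pk; rewrite ffunE; case: eqP Pk => // ->; rewrite (negbTE Pj).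
Qed.

Lemma mdeg_split p u :
  mdeg u = pdeg (fun k => k <= p) u + pdeg (fun k => p < k) u.
Proof.
rewrite /mdeg (bigID (fun k : 'I_n => k <= p)) /=; congr (_ + _).
by apply: eq_bigl => k; rewrite ltnNge.
Qed.

Lemma mdivxK u j : 0 < u j -> mmul (mdivx u j) (xvar j) = u.
Proof.
move=> uj; apply/ffunP => k; rewrite !ffunE.
by case: eqP => [->|_]; rewrite ?addn1 ?prednK ?addn0.
Qed.

Lemma bmoveK u i j : i != j -> 0 < u j ->
  mmul (bmove u i j) (xvar j) = mmul u (xvar i).
Proof.
move=> nij uj; apply/ffunP => k; rewrite !ffunE.
have [->|_] := eqVneq k i; first by rewrite (negbTE nij) addn0 addn1.
by case: eqP => [->|_]; rewrite ?addn1 ?prednK ?addn0.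
Qed.

Lemma pdeg_bmove P u i j : i != j -> 0 < u j ->
  pdeg P (bmove u i j) + P j = pdeg P u + P i.
Proof. by move=> nij uj; rewrite -!pdeg_xvar -!pdeg_mmul bmoveK. Qed.

Lemma mdeg_bmove u i j : i != j -> 0 < u j -> mdeg (bmove u i j) = mdeg u.
Proof. by move=> nij uj; apply: addIn (pdeg_bmove predT nij uj). Qed.

Lemma mmul_mdivxC a b i : 0 < a i -> 0 < b i ->
  mmul a (mdivx b i) = mmul b (mdivx a i).
Proof.
move=> ai bi; apply/ffunP => k; rewrite !ffunE; case: eqP => [->|_].
  by rewrite -(prednK ai) -(prednK bi) /= !addSn addnC.
exact: addnC.
Qed.

Lemma mmul_mdivx_bmove a b i j : i != j -> 0 < a i ->
  mmul a (mdivx b j) = mmul (bmove b i j) (mdivx a i).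
Proof.
move=> nij ai; apply/ffunP => k; rewrite !ffunE.
have [->|_] := eqVneq k i; first by rewrite (negbTE nij) -(prednK ai) addSn addnC.
by case: eqP => _; rewrite addnC.
Qed.

Lemma monideal_mdvd (B : mono n -> Prop) u v :
  monideal B -> B u -> mdvd u v -> B v.
Proof.
move=> monB Bu uv; have -> : v = mmul u [ffun k => v k - u k].
  by apply/ffunP => k; rewrite !ffunE subnKC.
exact: monB.
Qed.

Lemma mdvd_bmove u v i j : mdvd u v -> mdvd (bmove u i j) (bmove v i j).
Proof.
move=> uv k; rewrite !ffunE; case: eqP => _; first by rewrite ltnS.
by case: eqP => _; rewrite -?subn1 ?leq_sub2r.
Qed.

Lemma mdvd_bmove_r u v i j : u j = 0 -> mdvd u v -> mdvd u (bmove v i j).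
Proof.
move=> uj0 uv k; rewrite ffunE; case: eqP => [->|_]; first exact: leqW.
by case: eqP => [->|_]; rewrite ?uj0.
Qed.

Lemma borelU (A A' : mono n -> Prop) :
  borel A -> borel A' -> borel (fun u => A u \/ A' u).
Proof.
move=> [monA borA] [monA' borA']; split=> [a b|u i j ij uj] [Au|Au].
- by left; apply: monA.
- by right; apply: monA'.
- by left; apply: borA.
- by right; apply: borA'.
Qed.

Lemma borel_pdeg_ge d p : borel (fun u => d <= pdeg (fun k => k <= p) u).
Proof.
split=> [a b|u i j ij uj] Hd; apply: leq_trans Hd _.
  by rewrite pdeg_mmul leq_addr.
have nij : i != j by rewrite neq_ltn ij.
rewrite -(leq_add2r (i <= p)) -(pdeg_bmove _ nij uj) leq_add2l.
by case: (j <= p) / idP => // jp; rewrite (ltnW (leq_trans ij jp)).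
Qed.

Definition lowdeg_ideal (B' : mono n -> Prop) d u : Prop :=
  exists v, [/\ mdvd v u, mdeg v <= d & B' v].

Lemma borel_lowdeg_ideal (B' : mono n -> Prop) d :
  borel B' -> borel (lowdeg_ideal B' d).
Proof.
move=> [_ borB']; split=> [a b|u i j ij uj] [v [vu dv B'v]].
  by exists v; split=> // k; rewrite ffunE; apply: leq_trans (vu k) (leq_addr _ _).
have [vj0|vj] := posnP (v j); first by exists v; split=> //; apply: mdvd_bmove_r.
have nij : i != j by rewrite neq_ltn ij.
exists (bmove v i j); split; [exact: mdvd_bmove | by rewrite mdeg_bmove | exact: borB'].
Qed.

Lemma is_max_tail m p : is_max m p -> pdeg (fun k => p < k) m = 0.
Proof. by move=> [_ mz]; apply: big1 => k /mz. Qed.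

Lemma deficit_head m p v : is_max m p -> mdeg v <= mdeg m ->
  0 < pdeg (fun k => p < k) v -> exists2 i : 'I_n, i <= p & v i < m i.
Proof.
move=> mx dv tv; apply/exists_inP/contraT.
rewrite negb_exists_in => /forall_inP vm; move: dv; rewrite (mdeg_split p m) (is_max_tail mx) addn0.
rewrite (mdeg_split p) leqNgt => /negP[]; rewrite -addn1 leq_add //.
by apply: leq_sum => k kp; rewrite leqNgt (negbTE (vm k kp)).
Qed.

Lemma borel_fill (B' : mono n -> Prop) m p v : borel B' -> is_max m p ->
  B' v -> (forall i, i <= p -> v i <= m i) -> mdeg v <= mdeg m -> B' m.
Proof.
move=> BB' mx; have [monB' borB'] := BB'.
have [t] := ubnP (pdeg (fun k => p < k) v); elim: t v => // t IH v tvt B'v vm dv.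
have [tv0|tv] := posnP (pdeg (fun k => p < k) v).
  apply: monideal_mdvd monB' B'v _ => k; case: (leqP k p) => [/vm //|pk].
  by move/eqP: tv0; rewrite /pdeg sum_nat_eq0 => /forall_inP/(_ k pk)/eqP->.
have [j /andP[pj vj]] : exists j, (p < j) && (0 < v j).
  move: tv; rewrite lt0n /pdeg sum_nat_eq0 negb_forall => /existsP[j].
  by rewrite negb_imply -lt0n; exists j.
have [i ip vi] := deficit_head mx dv tv.
have nij : i != j by rewrite neq_ltn (leq_ltn_trans ip pj).
apply: (IH (bmove v i j)).
- have := pdeg_bmove (fun k => p < k) nij vj.
  by rewrite pj ltnNge ip addn0 addn1 -ltnS => ->.
- exact: borB' (leq_ltn_trans ip pj) vj B'v.
- move=> k kp; rewrite ffunE; case: eqP => [->//|_].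
  by case: eqP => [ej|_]; [move: pj; rewrite -ej ltnNge kp | exact: vm].
- by rewrite mdeg_bmove.
Qed.

Lemma pdeg_head_mdivx m p (mu : mono n) : is_max m p -> (forall i, i <= p -> mu i = 0) ->
  pdeg (fun k => k <= p) (mmul mu (mdivx m p)) < mdeg m.
Proof.
move=> mx mu0; have [mp _] := mx; rewrite pdeg_mmul.
have -> : pdeg (fun k => k <= p) mu = 0 by apply: big1.
rewrite add0n (mdeg_split p m) (is_max_tail mx) addn0.
by rewrite -{2}(mdivxK mp) pdeg_mmul pdeg_xvar /= leqnn addn1.
Qed.

Lemma bgenerates_remove (B T : mono n -> Prop) m p (mu : mono n) :
  bgenerates T B -> is_max m p -> (forall t, T t -> mdeg t <= mdeg m) ->
  (forall i, i <= p -> mu i = 0) -> B (mmul mu (mdivx m p)) ->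
  bgenerates (fun t => T t /\ t <> m) B.
Proof.
move=> [BB TB genB] mx degT mu0 Bw; split=> // [t [/TB //]|B' BB' T'B'].
have TB' t : T t -> t <> m -> B' t by move=> Tt tm; apply: T'B'.
suff B'm : B' m.
  by apply: genB => // t Tt; have [->|/eqP] := eqVneq t m; last exact: TB'.
pose C u := lowdeg_ideal B' (mdeg m) u \/ mdeg m <= pdeg (fun k => k <= p) u.
have BC : borel C by apply: borelU; [apply: borel_lowdeg_ideal | apply: borel_pdeg_ge].
have TC t : T t -> C t.
  move=> Tt; have [->|/eqP tm] := eqVneq t m.
    by right; rewrite (mdeg_split p m) (is_max_tail mx) addn0.
  by left; exists t; split; [move=> k | exact: degT | exact: TB'].
have [[v [vw dv B'v]]|] := genB C BC TC _ Bw; last first.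
  by rewrite leqNgt (pdeg_head_mdivx mx mu0).
apply: borel_fill BB' mx B'v _ dv => i ip; apply: leq_trans (vw i) _.
by rewrite !ffunE mu0 //; case: eqP => // _; apply: leq_pred.
Qed.

End Monomials.

Theorem lemma3p15 (n : nat) (B T : mono n -> Prop) (m : mono n) (p : 'I_n) :
  borel B -> is_Bgens B T -> is_max m p -> T m ->
  (forall m' : mono n, T m' -> mdeg m' <= mdeg m) ->
  psocle B (mdivx m p) p.+1.
Proof.
move=> [monB borB] [genT minT] mx Tm degT mu; have [mp _] := mx.
have [_ TB _] := genT; split=> [Bw|[i [ip mui]]].
- case: (boolP [exists (i : 'I_n | i <= p), 0 < mu i]) => [/exists_inP[i ip mui]|].
    by exists i.
  rewrite negb_exists_in => /forall_inP mu0.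
  have mu0' (i : 'I_n) : i <= p -> mu i = 0 by move/mu0; rewrite lt0n negbK => /eqP.
  have gen' := bgenerates_remove genT mx degT mu0' Bw.
  by have [] := minT _ (fun t (Tt : T t /\ t <> m) => proj1 Tt) gen' m Tm.
- have [eip | nip] := eqVneq i p.
    by subst i; rewrite mmul_mdivxC //; apply/monB/TB.
  rewrite (mmul_mdivx_bmove _ nip mui); apply/monB/borB/TB => //.
  by rewrite ltn_neqAle nip -ltnS.
Qed.
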